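(* Let $\mathcal A$ be an NBA and let $R$ be a strict partial order on its states with $R\subseteq\ \subseteq^{\mathrm{di}}$. Then $P(\mathrm{id},R)$ is good for pruning, i.e. $\mathcal L(\mathrm{Prune}(\mathcal A,P(\mathrm{id},R)))=\mathcal L(\mathcal A)$. In particular this holds for $R$ the strict part of direct trace inclusion.
   Context: An NBA is $\mathcal A=(\Sigma,Q,I,F,\delta)$, $\delta\subseteq Q\times\Sigma\times Q$, assumed forward and backward complete. Traces, initial traces (starting in $I$), fair traces (infinite, visiting $F$ infinitely often), and the language (infinite words with an initial fair trace) are as usual. Direct trace inclusion: $p\subseteq^{\mathrm{di}}q$ iff for every infinite word $w=\sigma_0\sigma_1\cdots$ and every infinite trace $p=p_0\xrightarrow{\sigma_0}p_1\xrightarrow{\sigma_1}\cdots$ there is an infinite trace $q=q_0\xrightarrow{\sigma_0}q_1\xrightarrow{\sigma_1}\cdots$ with $p_i\in F\Rightarrow q_i\in F$ for all $i$. Its strict part: $p\subset^{\mathrm{di}}q$ iff $p\subseteq^{\mathrm{di}}q$ and not $q\subseteq^{\mathrm{di}}p$. For $P\subseteq\delta\times\delta$, $\mathrm{Prune}(\mathcal A,P)=(\Sigma,Q,I,F,\delta')$ with $\delta'=\{t\in\delta:\nexists t'\in\delta,\ (t,t')\in P\}$ (all dominated transitions are removed simultaneously). For $R_b,R_f\subseteq Q\times Q$, $P(R_b,R_f)=\{((p,\sigma,r),(p',\sigma,r'))\in\delta\times\delta: p\,R_b\,p',\ r\,R_f\,r'\}$; $\mathrm{id}$ is the identity relation.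 $P$ is good for pruning if the pruned automaton has the same language as $\mathcal A$. *)

From mathcomp Require Import all_boot.
Set Implicit Arguments. Unset Strict Implicit. Unset Printing Implicit Defensive.

Definition trans_rel (Sigma Q : Type) := Q -> Sigma -> Q -> Prop.

Definition transition (Sigma Q : Type) := (Q * Sigma * Q)%type.

Record NBA (Sigma Q : finType) := mkNBA {
  init : {set Q};
  fin  : {set Q};
  delta : trans_rel Sigma Q
}.

Definition forward_complete (Sigma Q : Type) (d : trans_rel Sigma Q) :=
  forall (p : Q) (a : Sigma), exists r, d p a r.
Definition backward_complete (Sigma Q : Type) (d : trans_rel Sigma Q) :=
  forall (r : Q) (a : Sigma), exists p, d p a r.

Definition word (Sigma : Type) := nat -> Sigma.
Definition is_trace (Sigma Q : Type) (d : trans_rel Sigma Q)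
  (w : word Sigma) (r : nat -> Q) := forall i, d (r i) (w i) (r i.+1).

Definition fair (Q : finType) (F : {set Q}) (r : nat -> Q) :=
  forall n, exists m, n <= m /\ r m \in F.

Definition accepts (Sigma Q : finType) (A : NBA Sigma Q) (w : word Sigma) :=
  exists r : nat -> Q, is_trace (delta A) w r /\ r 0 \in init A /\ fair (fin A) r.

Definition same_language (Sigma Q : finType) (A B : NBA Sigma Q) :=
  forall w : word Sigma, accepts A w <-> accepts B w.

Definition di_incl (Sigma Q : finType) (A : NBA Sigma Q) (p q : Q) :=
  forall (w : word Sigma) (rp : nat -> Q),
    is_trace (delta A) w rp -> rp 0 = p ->
    exists rq : nat -> Q, is_trace (delta A) w rq /\ rq 0 = q /\
      forall i, rp i \in fin A -> rq i \in fin A.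

Definition di_strict (Sigma Q : finType) (A : NBA Sigma Q) (p q : Q) :=
  di_incl A p q /\ ~ di_incl A q p.

Definition strict_partial_order (Q : Type) (R : Q -> Q -> Prop) :=
  (forall x, ~ R x x) /\ (forall x y z, R x y -> R y z -> R x z).

Definition Prune (Sigma Q : finType) (A : NBA Sigma Q)
  (P : transition Sigma Q -> transition Sigma Q -> Prop) : NBA Sigma Q :=
  mkNBA (init A) (fin A)
    (fun p a r => delta A p a r /\
       ~ (exists p' a' r', delta A p' a' r' /\ P (p, a, r) (p', a', r'))).

Definition Pdom (Sigma Q : finType) (A : NBA Sigma Q) (Rb Rf : Q -> Q -> Prop)
  (t t' : transition Sigma Q) : Prop :=
  let: (p, a, r) := t in let: (p', a', r') := t' in
  delta A p a r /\ delta A p' a' r' /\ a = a' /\ Rb p p' /\ Rf r r'.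

Definition idrel (Q : Type) (x y : Q) : Prop := x = y.

Definition good_for_pruning (Sigma Q : finType) (A : NBA Sigma Q)
  (P : transition Sigma Q -> transition Sigma Q -> Prop) :=
  same_language (Prune A P) A.

(* Given an accepting run, repair it one position at a time: at step k replace the
   target of the k-th transition by an R-maximal successor y of the same source on
   the same letter (one exists since R is a strict order on a finite set), and
   continue from y along a run that direct trace inclusion provides, which is
   accepting wherever the old run was. The transition to a maximal y is never
   dominated, so it survives pruning. Each repair leaves the prefix up to k fixed,
   hence the runs converge to a run of the pruned automaton that visits F at least
   wherever the original run did. *)
From mathcomp Require Import all_boot boolp.
Set Implicit Arguments. Unset Strict Implicit. Unset Printing Implicit Defensive.

Lemma exists_maximal (T : finType) (R : T -> T -> Prop) (S : T -> Prop) x :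
  strict_partial_order R -> S x ->
  exists2 y, S y & (y = x \/ R x y) /\ forall z, S z -> ~ R y z.
Proof.
move=> [irrR transR].
pose above x := [set z | `[< S z /\ R x z >]].
have [n] := ubnP #|above x|; elim: n x => // n IH x above_lt Sx.
have [[z [Sz Rxz]] | x_max] := pselect (exists z, S z /\ R x z); last first.
  by exists x => //; split; [left | move=> z Sz Rxz; apply: x_max; exists z].
have above_proper : above z \proper above x.
  apply/properP; split.
    apply/subsetP => u; rewrite !inE => /asboolP [Su Rzu].
    by apply/asboolP; split; last exact: transR Rxz Rzu.
  by exists z; rewrite !inE; [apply/asboolP | apply/negP => /asboolP [_ /irrR]].
have [y Sy [zy y_max]] := IH z (leq_trans (proper_card above_proper) above_lt) Sz.
exists y => //; split=> //; right.
by case: zy => [-> // | Rzy]; exact: transR Rxz Rzy.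
Qed.

Lemma diagonal_stable (T : Type) (f : nat -> nat -> T) :
  (forall k i, i <= k -> f k.+1 i = f k i) -> forall k i, i <= k -> f k i = f i i.
Proof.
move=> f_stable k i; elim: k => [|k IH]; first by rewrite leqn0 => /eqP ->.
by rewrite leq_eqVlt => /orP [/eqP -> // | ik]; rewrite f_stable // IH.
Qed.

Definition splice (T : Type) (n : nat) (rho sigma : nat -> T) (i : nat) : T :=
  if i <= n then rho i else sigma (i - n.+1).

Lemma splice_trace (Sigma Q : Type) (d : trans_rel Sigma Q) (w : word Sigma)
    (n : nat) (rho sigma : nat -> Q) :
  is_trace d w rho -> is_trace d (fun j => w (j + n.+1)) sigma ->
  d (rho n) (w n) (sigma 0) -> is_trace d w (splice n rho sigma).
Proof.
move=> rho_tr sigma_tr join i; rewrite /splice.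
case: (ltngtP i n) => [_ | lt_ni | ->]; [exact: rho_tr | | by rewrite subnn].
rewrite subSS -(subnSK lt_ni).
by have := sigma_tr (i - n.+1); rewrite subnK.
Qed.

Lemma di_incl_refl (Sigma Q : finType) (A : NBA Sigma Q) p : di_incl A p p.
Proof. by move=> w rp rp_tr rp0; exists rp. Qed.

Lemma di_incl_trans (Sigma Q : finType) (A : NBA Sigma Q) x y z :
  di_incl A x y -> di_incl A y z -> di_incl A x z.
Proof.
move=> xy yz w rx rx_tr rx0.
have [ry [ry_tr [ry0 ry_fin]]] := xy w rx rx_tr rx0.
have [rz [rz_tr [rz0 rz_fin]]] := yz w ry ry_tr ry0.
by exists rz; split=> //; split=> // i /ry_fin /rz_fin.
Qed.

Lemma di_strict_spo (Sigma Q : finType) (A : NBA Sigma Q) :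
  strict_partial_order (di_strict A).
Proof.
split; first by move=> x [].
move=> x y z [xy not_yx] [yz not_zy]; split; first exact: di_incl_trans xy yz.
by move=> zx; apply: not_yx; exact: di_incl_trans yz zx.
Qed.

Lemma accepts_Prune (Sigma Q : finType) (A : NBA Sigma Q) P w :
  accepts (Prune A P) w -> accepts A w.
Proof. by move=> [r [r_tr r_init]]; exists r; split=> // i; case: (r_tr i). Qed.

Section PruneDominated.

Variables (Sigma Q : finType) (A : NBA Sigma Q) (R : Q -> Q -> Prop).
Hypothesis R_spo : strict_partial_order R.
Hypothesis R_di_incl : forall p q, R p q -> di_incl A p q.

Local Notation pruned := (Prune A (Pdom A (@idrel Q) R)).

Lemma delta_pruned_maximal p a r :
  delta A p a r -> (forall r', delta A p a r' -> ~ R r r') -> delta pruned p a r.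
Proof.
move=> d_par r_max; split=> // [[p' [a' [r' [d' /= [_ [_ [aE [pE Rrr']]]]]]]]].
by rewrite /idrel in pE; subst a' p'; exact: r_max d' Rrr'.
Qed.

Lemma pruned_step (w : word Sigma) (k : nat) (rho : nat -> Q) :
  is_trace (delta A) w rho ->
  exists rho', [/\ is_trace (delta A) w rho', forall i, i <= k -> rho' i = rho i,
    delta pruned (rho' k) (w k) (rho' k.+1) &
    forall i, rho i \in fin A -> rho' i \in fin A].
Proof.
move=> rho_tr.
have [y d_ky [rho_y y_max]] :=
  exists_maximal (S := fun q => delta A (rho k) (w k) q) R_spo (rho_tr k).
have rho_y_di : di_incl A (rho k.+1) y.
  by case: rho_y => [-> | /R_di_incl //]; exact: di_incl_refl.
have [sigma [sigma_tr [sigma0 sigma_fin]]] :=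
  rho_y_di (fun j => w (j + k.+1)) (fun j => rho (j + k.+1))
    (fun j => rho_tr (j + k.+1)) erefl.
exists (splice k rho sigma); split.
- by apply: splice_trace; rewrite ?sigma0.
- by move=> i; rewrite /splice => ->.
- by rewrite /splice leqnn ltnn subnn sigma0; exact: delta_pruned_maximal.
- move=> i; rewrite /splice; case: leqP => // lt_ki rho_i_fin.
  by apply: sigma_fin; rewrite subnK.
Qed.

Lemma accepts_pruned (w : word Sigma) : accepts A w -> accepts pruned w.
Proof.
move=> [r0 [r0_tr [r0_init r0_fair]]].
pose T := {rho : nat -> Q | is_trace (delta A) w rho}.
have next k (s : T) : {s' : T | [/\ forall i, i <= k -> sval s' i = sval s i,
    delta pruned (sval s' k) (w k) (sval s' k.+1) &
    forall i, sval s i \in fin A -> sval s' i \in fin A]}.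
  have /cid [rho' [rho'_tr rho'_stable rho'_pruned rho'_fin]] := pruned_step k (svalP s).
  by exists (exist _ rho' rho'_tr).
pose fix runs k : T := if k is k'.+1 then sval (next k' (runs k')) else exist _ r0 r0_tr.
have runs_stable k i : i <= k -> sval (runs k.+1) i = sval (runs k) i.
  by case: (svalP (next k (runs k))) => stable _ _; exact: stable.
have runs_fin k i : r0 i \in fin A -> sval (runs k) i \in fin A.
  elim: k => [// | k IH] /IH.
  by case: (svalP (next k (runs k))) => _ _ fin_mono; exact: fin_mono.
have diagE := diagonal_stable (f := fun k i => sval (runs k) i) runs_stable.
exists (fun i => sval (runs i) i); split; [move=> i /= | split => //].
- rewrite -(diagE i.+1 i (leqnSn i)).
  by case: (svalP (next i (runs i))).
- by move=> n; have [m [nm r0_m]] := r0_fair n; exists m; split=> //; exact: runs_fin.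
Qed.

Lemma Pdom_id_good_for_pruning : good_for_pruning A (Pdom A (@idrel Q) R).
Proof. by move=> w; split; [exact: accepts_Prune | exact: accepts_pruned]. Qed.

End PruneDominated.

Theorem theorem5p1 (Sigma Q : finType) (A : NBA Sigma Q) :
  forward_complete (delta A) -> backward_complete (delta A) ->
  (forall R : Q -> Q -> Prop,
     strict_partial_order R ->
     (forall p q, R p q -> di_incl A p q) ->
     good_for_pruning A (Pdom A (@idrel Q) R))
  /\ good_for_pruning A (Pdom A (@idrel Q) (di_strict A)).
Proof.
move=> _ _; split=> [R R_spo R_di | ]; first exact: Pdom_id_good_for_pruning.
by apply: Pdom_id_good_for_pruning; [exact: di_strict_spo | move=> p q []].
Qed.
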